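(* Let $G$ be the $m\times n$ triangle lattice tube graph with $n\ge 4$ and $m\ge 3$. Then $T_1(G)=2$.
   Context: The $m\times n$ triangular lattice graph is $P_m\times P_n$ (Cartesian product of paths; vertices are integer points $(i,j)$, $1\le i\le n$, $1\le j\le m$) together with the diagonal edges joining $(i,j)$ and $(i+1,j+1)$. The $m\times n$ triangle lattice tube graph is obtained from it by identifying, in each of the $m$ rows, the first vertex $(1,j)$ with the last vertex $(n,j)$ (so the lattice wraps into a tube; equivalently its vertex set is $\mathbb{Z}_{n-1}\times\{1,\dots,m\}$ with edges $(i,j)(i+1,j)$, $(i,j)(i,j+1)$, $(i,j)(i+1,j+1)$). Fix a set $\Sigma$ of symbols (bond-edge types) and a disjoint copy $\hat\Sigma=\{\hat a:a\in\Sigma\}$ with $\hat{\hat a}=a$; elements of $\Sigma\cup\hat\Sigma$ are cohesive-end types. A tile is a finite multiset of cohesive-end types. A pot is a finite set $P$ of tiles such that whenever $x$ occurs in a tile of $P$, $\hat x$ occurs in some tile of $P$; $\#P$ is its number of tiles. Graphs are finite, loops and multiple edges allowed. An assembly design of a graph $H$ labels the half-edges of $H$ by cohesive-end types so that the two half-edges of each edge receive complementary labels $x,\hat x$; $t_v$ is the multiset of labels at $v$, $P_\lambda(H)=\{t_v\}$, and $P$ realizes $H$ ($H\in\mathcal{O}(P)$) if some assembly design $\lambda$ has $P_\lambda(H)\subseteq P$. $T_1(G)=\min\{\#P: G\in\mathcal{O}(P)\}$. *)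

From mathcomp Require Import all_boot.
Set Implicit Arguments. Unset Strict Implicit. Unset Printing Implicit Defensive.

(* Bond-edge types Sigma := nat.  A cohesive-end type is (a, false) = a or
   (a, true) = \hat a. *)
Definition cend := (nat * bool)%type.
Definition hat (x : cend) : cend := (x.1, ~~ x.2).

(* A tile is a finite multiset of cohesive-end types, represented by a
   sequence up to permutation (perm_eq). *)
Definition tile := seq cend.

Definition is_pot (P : seq tile) : Prop :=
  pairwise (fun t1 t2 => ~~ perm_eq t1 t2) P /\
  (forall t x, t \in P -> x \in t -> exists2 t', t' \in P & hat x \in t').

(* A finite graph (loops and multiple edges allowed): a duplicate-free list of
   vertices and a list of edges (each edge a pair of endpoints, so
   multiplicities are recorded). *)
Record graph (V : eqType) := Graph { verts : seq V; edges : seq (V * V) }.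

Definition is_graph (V : eqType) (G : graph V) : Prop :=
  uniq (verts G) /\ all (fun e => (e.1 \in verts G) && (e.2 \in verts G)) (edges G).

(* Assembly design: a list lam of labels, one per edge; the edge (u,w) with
   label x gets x on its half-edge at u and hat x on its half-edge at w.
   tile_at lam v is the multiset t_v of labels of half-edges at v. *)
Definition tile_at (V : eqType) (G : graph V) (lam : seq cend) (v : V) : tile :=
  flatten [seq (if p.1.1 == v then [:: p.2] else [::]) ++
               (if p.1.2 == v then [:: hat p.2] else [::])
          | p <- zip (edges G) lam].

Definition realizes (V : eqType) (P : seq tile) (G : graph V) : Prop :=
  exists lam : seq cend, size lam = size (edges G) /\
    forall v, v \in verts G -> has (perm_eq (tile_at G lam v)) P.

Definition T1_is (V : eqType) (G : graph V) (k : nat) : Prop :=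
  (exists P, is_pot P /\ size P = k /\ realizes P G) /\
  (forall P, is_pot P -> realizes P G -> k <= size P).

(* m x n triangle lattice tube: vertices Z_(n-1) x {0..m-1} (0-indexed),
   edges (i,j)(i+1,j), (i,j)(i,j+1), (i,j)(i+1,j+1), indices i mod n-1. *)
Definition tube (m n : nat) : graph (nat * nat)%type :=
  Graph [seq (i, j) | i <- iota 0 n.-1, j <- iota 0 m]
    ([seq ((i, j), ((i.+1 %% n.-1), j)) | i <- iota 0 n.-1, j <- iota 0 m] ++
     [seq ((i, j), (i, j.+1)) | i <- iota 0 n.-1, j <- iota 0 m.-1] ++
     [seq ((i, j), ((i.+1 %% n.-1), j.+1)) | i <- iota 0 n.-1, j <- iota 0 m.-1]).

From mathcomp Require Import all_boot.
From mathcomp Require Import zify.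

Set Implicit Arguments.
Unset Strict Implicit.
Unset Printing Implicit Defensive.

(* Label every horizontal and vertical edge of the tube by a and every
   diagonal edge by \hat a.  Each vertex then carries as many a's as \hat a's,
   namely half its degree: 2 on the two boundary rows, 3 on the interior rows.
   So the pot {a^2 \hat a^2, a^3 \hat a^3} realizes the tube.  Conversely the
   tile at a vertex has the degree of that vertex as its size, and since
   m >= 3 both degrees 4 and 6 occur, so no pot with fewer than two tiles
   realizes the tube. *)

Lemma hatK : involutive hat.
Proof. by case=> a []. Qed.

Section HalfEdgeLabels.
Variable V : eqType.
Implicit Types (E : seq (V * V)) (lam : seq cend) (x : cend) (v : V).

Definition half_edge_labels E lam v : tile :=
  flatten [seq (if p.1.1 == v then [:: p.2] else [::]) ++
               (if p.1.2 == v then [:: hat p.2] else [::])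
          | p <- zip E lam].

Definition degree (G : graph V) v :=
  count_mem v (unzip1 (edges G)) + count_mem v (unzip2 (edges G)).

Lemma tile_atE (G : graph V) lam v :
  tile_at G lam v = half_edge_labels (edges G) lam v.
Proof. by []. Qed.

Lemma half_edge_labels_cat E1 E2 lam1 lam2 v : size lam1 = size E1 ->
  half_edge_labels (E1 ++ E2) (lam1 ++ lam2) v =
  half_edge_labels E1 lam1 v ++ half_edge_labels E2 lam2 v.
Proof. by move=> eq_size; rewrite /half_edge_labels zip_cat // map_cat flatten_cat. Qed.

Lemma size_half_edge_labels E lam v : size lam = size E ->
  size (half_edge_labels E lam v) = count_mem v (unzip1 E) + count_mem v (unzip2 E).
Proof.
elim: E lam => [|e E IH] [|x lam] //= [/IH eq_size].
rewrite /half_edge_labels /= size_cat -/(half_edge_labels E lam v) eq_size.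
by case: (e.1 == v); case: (e.2 == v) => /=; lia.
Qed.

Lemma perm_half_edge_labels_nseq E x v :
  perm_eq (half_edge_labels E (nseq (size E) x) v)
          (nseq (count_mem v (unzip1 E)) x ++ nseq (count_mem v (unzip2 E)) (hat x)).
Proof.
elim: E => [|e E IH] //=.
have nseq_if (b : bool) (y : cend) : (if b then [:: y] else [::]) = nseq b y by case: b.
rewrite /half_edge_labels /= -/(half_edge_labels E _ v) !nseq_if !nseqD -!catA.
by rewrite perm_cat2l perm_sym perm_catCA perm_cat2l perm_sym.
Qed.

Lemma size_tile_at (G : graph V) lam v : size lam = size (edges G) ->
  size (tile_at G lam v) = degree G v.
Proof. exact: size_half_edge_labels. Qed.

Lemma size_undup_degree_le (G : graph V) P : realizes P G ->
  size (undup (map (degree G) (verts G))) <= size P.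
Proof.
case=> lam [eq_size tile_in_P]; rewrite -(size_map size).
apply: uniq_leq_size => [|d]; first exact: undup_uniq.
rewrite mem_undup => /mapP [v /tile_in_P /hasP [t t_in_P perm_t] ->].
by rewrite -(size_tile_at v eq_size) (perm_size perm_t) map_f.
Qed.

End HalfEdgeLabels.

Lemma count_mem_allpairs_pair (S T : eqType) (s : seq S) (t : seq T) x y :
  count_mem (x, y) [seq (i, j) | i <- s, j <- t] = count_mem x s * count_mem y t.
Proof.
elim: s => //= i s IH; rewrite count_cat IH count_map mulnDl; congr (_ + _).
have [->|ne_ix] := eqVneq i x.
  by rewrite mul1n; apply: eq_count => j /=; rewrite xpair_eqE eqxx.
rewrite mul0n -(count_pred0 t); apply: eq_count => j /=.
by rewrite xpair_eqE (negbTE ne_ix).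
Qed.

Lemma unzip1_allpairs (S T : eqType) (s : seq S) (t : seq T) (f : S -> S) (g : T -> T) :
  unzip1 [seq ((i, j), (f i, g j)) | i <- s, j <- t] = [seq (i, j) | i <- s, j <- t].
Proof. by rewrite /unzip1 map_allpairs. Qed.

Lemma unzip2_allpairs (S T : eqType) (s : seq S) (t : seq T) (f : S -> S) (g : T -> T) :
  unzip2 [seq ((i, j), (f i, g j)) | i <- s, j <- t] =
  [seq (i, j) | i <- map f s, j <- map g t].
Proof. by rewrite /unzip2 map_allpairs allpairs_mapl allpairs_mapr. Qed.

Lemma map_succ_mod_iota N : map (fun i => i.+1 %% N) (iota 0 N) = rot 1 (iota 0 N).
Proof.
case: N => // N; rewrite [in RHS]/= rot1_cons.
have -> : iota 0 N.+1 = rcons (iota 0 N) N by rewrite -cats1 -addn1 iotaD.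
rewrite map_rcons modnn (iotaDl 1 0); congr rcons.
by apply/eq_in_map => i; rewrite mem_iota => /andP[_ lt_iN]; rewrite modn_small.
Qed.

Lemma count_mem_iota a b i : count_mem i (iota a b) = (a <= i < a + b).
Proof. by rewrite count_uniq_mem ?iota_uniq ?mem_iota. Qed.

Definition tube_horizontal m n : seq ((nat * nat) * (nat * nat)) :=
  [seq ((i, j), (i.+1 %% n.-1, j)) | i <- iota 0 n.-1, j <- iota 0 m].
Definition tube_vertical m n : seq ((nat * nat) * (nat * nat)) :=
  [seq ((i, j), (i, j.+1)) | i <- iota 0 n.-1, j <- iota 0 m.-1].
Definition tube_diagonal m n : seq ((nat * nat) * (nat * nat)) :=
  [seq ((i, j), (i.+1 %% n.-1, j.+1)) | i <- iota 0 n.-1, j <- iota 0 m.-1].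

Lemma tube_edges m n :
  edges (tube m n) = tube_horizontal m n ++ tube_vertical m n ++ tube_diagonal m n.
Proof. by []. Qed.

Definition base_end : cend := (0, false).

Definition balanced_tile k : tile := nseq k base_end ++ nseq k (hat base_end).

Definition tube_design m n : seq cend :=
  nseq (size (tube_horizontal m n)) base_end ++
  nseq (size (tube_vertical m n)) base_end ++
  nseq (size (tube_diagonal m n)) (hat base_end).

Definition tube_half_degree m j := 1 + (j < m.-1) + (0 < j).

Lemma tile_at_tube_design m n i j : i < n.-1 -> j < m ->
  perm_eq (tile_at (tube m n) (tube_design m n) (i, j))
          (balanced_tile (tube_half_degree m j)).
Proof.
move=> lt_i lt_j.
rewrite tile_atE tube_edges /tube_design !half_edge_labels_cat ?size_nseq //.
apply: perm_trans (perm_cat (perm_half_edge_labels_nseq _ _ _)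
  (perm_cat (perm_half_edge_labels_nseq _ _ _) (perm_half_edge_labels_nseq _ _ _))) _.
rewrite !unzip1_allpairs !unzip2_allpairs !count_mem_allpairs_pair !map_id.
have perm_succ : perm_eq [seq i.+1 %% n.-1 | i <- iota 0 n.-1] (iota 0 n.-1).
  by rewrite map_succ_mod_iota perm_rot.
have -> : [seq j.+1 | j <- iota 0 m.-1] = iota 1 m.-1 by rewrite (iotaDl 1 0).
rewrite !(permP perm_succ) !count_mem_iota /balanced_tile /tube_half_degree.
have lt_j1 : j < 1 + m.-1 by lia.
apply/allP => y _; apply/eqP; rewrite !count_cat !count_nseq /= hatK !add0n lt_i lt_j lt_j1.
by case: (base_end == y); case: (hat base_end == y); lia.
Qed.

Lemma size_tube_design m n : size (tube_design m n) = size (edges (tube m n)).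
Proof. by rewrite tube_edges /tube_design !size_cat !size_nseq. Qed.

Lemma mem_tube_verts m n i j : ((i, j) \in verts (tube m n)) = (i < n.-1) && (j < m).
Proof.
rewrite -has_pred1 has_count count_mem_allpairs_pair !count_mem_iota !add0n.
by case: (i < n.-1); case: (j < m).
Qed.

Lemma degree_tube m n i j : i < n.-1 -> j < m ->
  degree (tube m n) (i, j) = (tube_half_degree m j).*2.
Proof.
move=> lt_i lt_j; rewrite -(size_tile_at (i, j) (size_tube_design m n)).
by rewrite (perm_size (tile_at_tube_design lt_i lt_j)) size_cat !size_nseq addnn.
Qed.

Lemma mem_balanced_tile k x :
  (x \in balanced_tile k) = (0 < k) && ((x == base_end) || (x == hat base_end)).
Proof. by rewrite mem_cat !mem_nseq andb_orr. Qed.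

Lemma is_pot_balanced_tiles : is_pot [:: balanced_tile 2; balanced_tile 3].
Proof.
split=> // t x t_in; have {t_in}[-> | ->] : t = balanced_tile 2 \/ t = balanced_tile 3.
  by move: t_in; rewrite !inE => /orP [] /eqP ->; [left | right].
all: rewrite mem_balanced_tile /= => x_ends; exists (balanced_tile 2) => //.
all: by rewrite mem_balanced_tile; case/orP: x_ends => /eqP ->; rewrite ?hatK eqxx ?orbT.
Qed.

Lemma realizes_tube m n : 1 < m -> realizes [:: balanced_tile 2; balanced_tile 3] (tube m n).
Proof.
move=> lt1m; exists (tube_design m n); split; first exact: size_tube_design.
case=> i j; rewrite mem_tube_verts => /andP [lt_i lt_j].
move: (tile_at_tube_design lt_i lt_j) => /permPl perm_tile /=; rewrite !perm_tile.
have [->|->] : tube_half_degree m j = 2 \/ tube_half_degree m j = 3.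
  by rewrite /tube_half_degree; lia.
all: by rewrite perm_refl ?orbT.
Qed.

Lemma realizes_tube_two_le_size m n P : 2 < m -> 0 < n.-1 -> realizes P (tube m n) -> 2 <= size P.
Proof.
move=> lt2m lt0n /size_undup_degree_le; apply: leq_trans.
apply: (@uniq_leq_size _ [:: 4; 6]) => // d; rewrite mem_undup !inE.
case/orP=> /eqP ->; apply/mapP.
- by exists (0, 0); rewrite ?mem_tube_verts ?degree_tube /tube_half_degree //=; lia.
- by exists (0, 1); rewrite ?mem_tube_verts ?degree_tube /tube_half_degree //=; lia.
Qed.

Theorem proposition8 (m n : nat) : 4 <= n -> 3 <= m -> T1_is (tube m n) 2.
Proof.
move=> le4n le3m; split; last by move=> P _; apply: realizes_tube_two_le_size => //; lia.
exists [:: balanced_tile 2; balanced_tile 3]; split; first exact: is_pot_balanced_tiles.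
split=> //; apply: realizes_tube; lia.
Qed.
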